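(* Let $n=2^k$ with $k>2$ an integer, and let $G=\langle 2^{k-1}-1\rangle$ be the subgroup of $\mathbb{Z}_n^\times$ generated by $2^{k-1}-1$. Then the coset index function $f_G$ is a $(2^k,2^{k-1}+1,\{0,2\})$ zero-difference function.
   Context: For a subgroup $G$ of $\mathbb{Z}_n^\times$ and $r\in\mathbb{Z}_n$, the coset $rG=\{rg\mid g\in G\}$; these cosets partition $\mathbb{Z}_n$, forming a set $D_G$. The coset index function induced by $G$ is $f_G:\mathbb{Z}_n\to\mathbb{Z}_{|D_G|}$, $f_G(x)=h_G(C_x)$, where $C_x$ is the coset containing $x$ and $h_G:D_G\to\mathbb{Z}_{|D_G|}$ is a fixed bijection. A function $f:A\to B$ between finite abelian groups is an $(n,m,S)$ zero-difference function if $n=|A|$, $m=|f(A)|$, and for every nonzero $a\in A$, $|\{x\in A\mid f(x+a)=f(x)\}|\in S$. Here $A=(\mathbb{Z}_n,+)$. *)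

From mathcomp Require Import all_boot all_order all_algebra all_fingroup.
Set Implicit Arguments. Unset Strict Implicit. Unset Printing Implicit Defensive.
Import GRing.Theory.
Local Open Scope ring_scope.

Definition unit_coset (n : nat) (G : {set {unit 'Z_n}}) (r : 'Z_n) : {set 'Z_n} :=
  [set r * FinRing.uval g | g in G].

Definition coset_set (n : nat) (G : {set {unit 'Z_n}}) : {set {set 'Z_n}} :=
  [set unit_coset G r | r : 'Z_n].

Definition coset_bijection (n : nat) (G : {set {unit 'Z_n}})
    (h : {set 'Z_n} -> 'Z_#|coset_set G|) : Prop :=
  {in coset_set G &, injective h} /\ h @: coset_set G = setT.

Definition coset_index_fun (n : nat) (G : {set {unit 'Z_n}})
    (h : {set 'Z_n} -> 'Z_#|coset_set G|) (x : 'Z_n) : 'Z_#|coset_set G| :=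
  h (unit_coset G x).

Definition zero_difference (A B : finZmodType) (f : A -> B)
    (n m : nat) (S : seq nat) : Prop :=
  [/\ #|A| = n, #|f @: [set: A]| = m &
      forall a : A, a != 0 -> #|[set x : A | f (x + a) == f x]| \in S].

(* Since u = 2^(k-1) - 1 squares to 1, the group G = <u> is {1, u} and the
   cosets are the sets {x, x u}.  Hence for a <> 0, f_G(x + a) = f_G(x) iff
   x (u - 1) = a, and the number of such x is either 0 or the size of the
   kernel of x |-> x (u - 1); as u - 1 is twice an odd number, that kernel is
   {0, 2^(k-1)}.  Burnside's lemma for G acting on Z_n by multiplication counts
   the cosets: 2 |D_G| = 2^k + |Fix(u)| = 2^k + 2. *)

From mathcomp Require Import all_boot all_order all_algebra all_fingroup.
From mathcomp Require Import zify ring.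

Set Implicit Arguments.
Unset Strict Implicit.
Unset Printing Implicit Defensive.
Import GRing.Theory.
Local Open Scope ring_scope.

Lemma cycle_involution (gT : finGroupType) (u : gT) :
  (u ^+ 2 = 1)%g -> <[u]>%g = [set 1; u]%g.
Proof.
move=> u2; apply/setP => g; rewrite !inE; apply/idP/idP.
  case/cycleP => i ->; elim: i => [|i]; first by rewrite expg0 eqxx.
  by rewrite expgS => /orP[] /eqP ->; rewrite ?mulg1 -?expg2 ?u2 eqxx ?orbT.
by case/orP => /eqP ->; [exact: group1 | exact: cycle_id].
Qed.

Lemma unit_cosetE n (G : {set {unit 'Z_n}}) r : unit_coset G r = orbit 'U G r.
Proof. by []. Qed.

Lemma coset_setE n (G : {set {unit 'Z_n}}) :
  coset_set G = orbit 'U G @: [set: 'Z_n].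
Proof. by apply/setP => C; apply/imsetP/imsetP => -[x _ ->]; exists x. Qed.

Lemma card_coset_index_fun_image n (G : {set {unit 'Z_n}})
    (h : {set 'Z_n} -> 'Z_#|coset_set G|) :
  coset_bijection h -> #|coset_index_fun h @: [set: 'Z_n]| = #|coset_set G|.
Proof.
move=> hh; have -> : coset_index_fun h @: [set: 'Z_n] = h @: coset_set G.
  apply/setP => c; apply/imsetP/imsetP => [[x _ ->]|[C /imsetP[x _ ->] ->]].
    by exists (unit_coset G x); first exact: imset_f.
  by exists x.
exact: card_in_imset hh.1.
Qed.

Section CosetsOfUnitGroup.

Variables (n : nat) (G : {group {unit 'Z_n}}).

Lemma card_coset_set :
  (#|coset_set G| * #|G| = \sum_(g in G) #|'Fix_'U[g]%g|)%N.
Proof.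
rewrite coset_setE -Frobenius_Cauchy; last first.
  by apply/actsP => g _ x; rewrite !inE.
by apply: eq_bigr => g _; rewrite setTI.
Qed.

Lemma coset_index_fun_eq (h : {set 'Z_n} -> 'Z_#|coset_set G|) x y :
  coset_bijection h ->
  (coset_index_fun h y == coset_index_fun h x) = (y \in unit_coset G x).
Proof.
move=> hh; rewrite /coset_index_fun (inj_in_eq hh.1) ?imset_f //.
by rewrite !unit_cosetE; apply/eqP/orbit_eqP.
Qed.

End CosetsOfUnitGroup.

Lemma card_mulr_fiber (R : finRingType) (c a : R) :
  #|[set x | x * c == a]| \in [:: 0%N; #|[set x | x * c == 0]|].
Proof.
case: (pickP [pred x | x * c == a]) => [x0 /eqP x0c | no_sol]; last first.
  suff -> : [set x | x * c == a] = set0 by rewrite cards0.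
  by apply/setP => x; rewrite !inE; exact: no_sol.
have -> : [set x | x * c == a] = [set x0 + y | y in [set y | y * c == 0]].
  apply/setP => x; rewrite inE; apply/eqP/imsetP => [xc | [y]].
    by exists (x - x0); rewrite ?inE ?mulrBl ?xc ?x0c ?subrr // addrC subrK.
  by rewrite inE => /eqP yc ->; rewrite mulrDl yc addr0.
by rewrite card_imset ?inE ?eqxx ?orbT //; exact: addrI.
Qed.

Section Involution.

Variables (n : nat) (u : {unit 'Z_n}).
Hypothesis u_invol : val u * val u = 1.

Lemma cycle_unit_involution : <[u]>%g = [set 1; u]%g.
Proof. by apply/cycle_involution/val_inj; rewrite FinRing.val_unitX expr2. Qed.

Lemma unit_coset_involution x : unit_coset <[u]>%g x = [set x; x * val u].
Proof.
by rewrite /unit_coset cycle_unit_involution imsetU1 imset_set1 mulr1.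
Qed.

Lemma afix_unit_involution : 'Fix_'U[u]%g = [set x | x * (val u - 1) == 0].
Proof.
apply/setP => x; rewrite [RHS]inE mulrBr mulr1 subr_eq0.
by apply/afix1P/eqP.
Qed.

Lemma card_coset_set_involution : u != 1%g ->
  (#|coset_set <[u]>%g| * 2 = #|'Z_n| + #|'Fix_'U[u]%g|)%N.
Proof.
move=> u_neq1.
have card_u : #|<[u]>%g| = 2%N.
  by rewrite cycle_unit_involution cards2 eq_sym u_neq1.
rewrite -card_u card_coset_set [gval _]/= cycle_unit_involution.
rewrite big_setU1 ?big_set1 /=.
  by rewrite afix1 cardsT.
by rewrite inE eq_sym.
Qed.

Lemma coset_index_fun_eq_involution
    (h : {set 'Z_n} -> 'Z_#|coset_set <[u]>%g|) (a x : 'Z_n) :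
  coset_bijection h -> a != 0 ->
  (coset_index_fun h (x + a) == coset_index_fun h x) = (x * (val u - 1) == a).
Proof.
move=> hh a_neq0; rewrite coset_index_fun_eq // unit_coset_involution !inE.
rewrite -{2}(addr0 x) (inj_eq (addrI x)) (negbTE a_neq0) /=.
by rewrite mulrBr mulr1 subr_eq addrC eq_sym.
Qed.

End Involution.

Lemma expn2S_gt1 k : (1 < 2 ^ k.+1)%N.
Proof. by rewrite -[1%N](expn0 2) ltn_exp2l. Qed.

Lemma Zp_pow2_half_neq0 k : (2 ^ k)%:R != 0 :> 'Z_(2 ^ k.+1).
Proof.
apply/negP => /eqP /(congr1 val) /=.
rewrite val_Zp_nat ?expn2S_gt1 // modn_small ?ltn_exp2l //.
by apply/eqP; rewrite expn_eq0.
Qed.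

Lemma odd_pow2_pred k : odd (2 ^ k.+1 - 1).
Proof. by rewrite oddB ?expn_gt0 // oddX. Qed.

Lemma Zp_pow2_mul_double_odd_eq0 k c (x : 'Z_(2 ^ k.+1)) : odd c ->
  (x * (c.*2)%:R == 0) = (x \in [set 0; (2 ^ k)%:R]).
Proof.
move=> odd_c; have p_gt1 := expn2S_gt1 k.
have x_lt : (x < 2 ^ k.+1)%N by rewrite -[X in (_ < X)%N]Zp_cast.
rewrite -[x in x * _]natr_Zp -natrM !inE -!val_eqE /= !val_Zp_nat //.
move: (x : nat) x_lt => m m_lt.
rewrite [(2 ^ k %% _)%N]modn_small ?ltn_exp2l //.
rewrite -[_ == 0]/(2 ^ k.+1 %| _)%N -muln2 mulnCA mulnC Gauss_dvdl; last first.
  by rewrite coprimeXl ?coprime2n.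
rewrite expnSr dvdn_pmul2r //.
apply/idP/orP => [/dvdnP [q m_eq] | [] /eqP ->]; [|exact: dvdn0|exact: dvdnn].
move: m_lt; rewrite m_eq expnS ltn_pmul2r ?expn_gt0 //.
by case: q {m_eq} => [|[|]] // _; [left | right]; rewrite ?mul0n ?mul1n.
Qed.

Section HalfPred.

Variable k : nat.
Local Notation half := ((2 ^ k.+1)%:R : 'Z_(2 ^ k.+2)).

Lemma Zp_pow2_half_add : half + half = 0.
Proof. by rewrite -natrD addnn -mul2n -expnS pchar_Zp ?expn2S_gt1. Qed.

Lemma Zp_pow2_half_sqr : half * half = 0.
Proof.
by rewrite -natrM -expnD -addSnnS expnD natrM pchar_Zp ?expn2S_gt1 // mul0r.
Qed.

Lemma Zp_pow2_half_pred_sqr :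
  (2 ^ k.+1 - 1)%:R * (2 ^ k.+1 - 1)%:R = 1 :> 'Z_(2 ^ k.+2).
Proof.
rewrite natrB ?expn_gt0 //.
have -> : (half - 1) * (half - 1) = half * half - (half + half) + 1 by ring.
by rewrite Zp_pow2_half_sqr Zp_pow2_half_add subrr add0r.
Qed.

Lemma Zp_pow2_half_pred_sub1 :
  (2 ^ k.+1 - 1)%:R - 1 = ((2 ^ k - 1).*2)%:R :> 'Z_(2 ^ k.+2).
Proof.
apply: (canLR (addrK 1)); rewrite natr1; congr (_%:R).
by have := expn_gt0 2 k; rewrite expnS; lia.
Qed.

End HalfPred.

Lemma Zp_pow2_half_pred_neq1 k : (2 ^ k.+2 - 1)%:R != 1 :> 'Z_(2 ^ k.+3).
Proof.
apply/negP => /eqP /(congr1 val) /=; rewrite val_Zp_nat ?Zp_cast ?expn2S_gt1 //.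
by have := expn_gt0 2 k; rewrite !modn_small !expnS; lia.
Qed.

Theorem theorem3p4 (k : nat) (hk : (2 < k)%N) (u : {unit 'Z_(2 ^ k)})
    (hu : FinRing.uval u = (2 ^ k.-1 - 1)%N%:R)
    (h : {set 'Z_(2 ^ k)} -> 'Z_#|coset_set <[u]>%g|)
    (hh : coset_bijection h) :
  zero_difference (coset_index_fun h) (2 ^ k) (2 ^ k.-1 + 1) [:: 0%N; 2%N].
Proof.
case: k hk u hu h hh => [|[|[|k]]] // _ u hu h hh.
have {}hu : val u = (2 ^ k.+2 - 1)%:R := hu.
have u_invol : val u * val u = 1 by rewrite hu Zp_pow2_half_pred_sqr.
have u_neq1 : u != 1%g.
  by apply: contraNneq (Zp_pow2_half_pred_neq1 k) => u1; rewrite -hu u1.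
have ker_u : [set x | x * (val u - 1) == 0] = [set 0; (2 ^ k.+2)%:R].
  apply/setP => x; rewrite inE hu Zp_pow2_half_pred_sub1.
  exact/Zp_pow2_mul_double_odd_eq0/odd_pow2_pred.
have card_ker : #|[set x | x * (val u - 1) == 0]| = 2%N.
  by rewrite ker_u cards2 eq_sym Zp_pow2_half_neq0.
have card_Z : #|'Z_(2 ^ k.+3)| = (2 ^ k.+3)%N.
  by rewrite card_ord Zp_cast ?expn2S_gt1.
split => //.
  rewrite card_coset_index_fun_image //.
  have := card_coset_set_involution u_invol u_neq1.
  rewrite afix_unit_involution // card_ker card_Z.
  by have : (2 ^ k.+3 = 2 * 2 ^ k.+3.-1)%N := expnS 2 k.+2; lia.
move=> a a_neq0.
under eq_finset => x do rewrite coset_index_fun_eq_involution //.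
by have := card_mulr_fiber (val u - 1) a; rewrite card_ker.
Qed.
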